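(* The containment relation $\ge$ is a partial order on the set $[\mathrm{Cay}]$ of equivalence classes of Cayley permutations.
   Context: A Cayley permutation is a word of positive integers in which every integer from $1$ to its maximum occurs; $\mathrm{Cay}$ is the set of all of them. Containment $y\le x$: indices $i_1<\dots<i_k$ ($k$ the length of $y$) with $x(i_s)<x(i_t)\iff y(s)<y(t)$ and $x(i_s)=x(i_t)\iff y(s)=y(t)$. For $x$ of length $n$, $\gamma(x)$ is the permutation obtained by sorting the pairs $(x(i),i)$ increasingly by first coordinate, ties by decreasing second coordinate, and reading the second coordinates. $x\sim y$ iff $\gamma(x)=\gamma(y)$; $[x]$ is the class of $x$ and $[\mathrm{Cay}]$ the set of classes. For classes, $[x]\ge[y]$ iff $x'\ge y'$ for some $x'\in[x]$ and $y'\in[y]$. *)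

(* Words are seq nat; indices are 0-based (irrelevant for gamma-equality). *)
From mathcomp Require Import all_boot.
Set Implicit Arguments. Unset Strict Implicit. Unset Printing Implicit Defensive.

Definition wmax (x : seq nat) : nat := foldr maxn 0 x.

Definition is_cay (x : seq nat) : Prop :=
  all (fun a => 0 < a) x /\ forall k, 1 <= k <= wmax x -> k \in x.

Definition contains (x y : seq nat) : Prop :=
  exists idx : seq nat,
    [/\ size idx = size y, sorted ltn idx, all (fun i => i < size x) idx &
        forall s t, s < size y -> t < size y ->
          (nth 0 x (nth 0 idx s) < nth 0 x (nth 0 idx t) <-> nth 0 y s < nth 0 y t) /\
          (nth 0 x (nth 0 idx s) = nth 0 x (nth 0 idx t) <-> nth 0 y s = nth 0 y t)].

Definition gamma_rel (p q : nat * nat) : bool :=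
  (p.1 < q.1) || ((p.1 == q.1) && (q.2 <= p.2)).

Definition gamma (x : seq nat) : seq nat :=
  map snd (sort gamma_rel (zip x (iota 0 (size x)))).

Definition cay_equiv (x y : seq nat) : Prop := gamma x = gamma y.

Definition class_ge (x y : seq nat) : Prop :=
  exists x' y', [/\ is_cay x', is_cay y', cay_equiv x' x, cay_equiv y' y & contains x' y'].

From mathcomp Require Import all_boot.
Set Implicit Arguments. Unset Strict Implicit. Unset Printing Implicit Defensive.

(* gamma x lists the positions of x sorted by the total order "i before j iff
   x(i) < x(j), or x(i) = x(j) and j <= i", so x ~ y exactly when x and y have
   the same length and induce the same order on positions.  An increasing
   embedding of y into x pulls this order back along the embedding.  Hence the
   identity embedding gives reflexivity.  Since ~ preserves length and
   containment cannot increase it, mutual containment forces the embedding to be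
   the identity, whence antisymmetry.  For transitivity, given x' >= y' and
   y'' >= z' with y' ~ y'', the two embeddings compose because y' and y'' order
   their positions alike; standardizing the resulting subword of x' yields a
   Cayley permutation with the same order on positions, hence in the class of z'. *)

Lemma sorted_indexE (T : eqType) (r : rel T) (s : seq T) :
  reflexive r -> antisymmetric r -> transitive r -> sorted r s ->
  {in s &, forall a b, r a b = (index a s <= index b s)}.
Proof.
move=> r_refl r_anti r_trans s_sorted a b a_s b_s; apply/idP/idP; last first.
  exact: (sorted_leq_index r_trans r_refl s_sorted).
move=> rab; rewrite leqNgt; apply/negP => lt_ba.
have rba := sorted_ltn_index r_trans s_sorted b a b_s a_s lt_ba.
by move: lt_ba; rewrite (r_anti a b) ?rab ?rba // ltnn.
Qed.

Lemma sorted_ltn_nth_leq (idx : seq nat) : sorted ltn idx ->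
  {in gtn (size idx) &, {mono nth 0 idx : s t / s <= t}}.
Proof. by move=> idx_sorted; apply/leq_mono_in/(sorted_ltn_nth ltn_trans). Qed.

Lemma sorted_ltn_iota (idx : seq nat) n :
  size idx = n -> sorted ltn idx -> all (gtn n) idx -> idx = iota 0 n.
Proof.
move=> idx_size idx_sorted idx_range.
apply: (irr_sorted_eq ltn_trans ltnn idx_sorted (iota_ltn_sorted 0 n)).
have idx_uniq : uniq idx.
  by apply: sorted_uniq idx_sorted; [exact: ltn_trans | exact: ltnn].
have idx_sub : {subset idx <= iota 0 n}.
  by move=> i /(allP idx_range); rewrite mem_iota add0n.
by have [] := uniq_min_size idx_uniq idx_sub; rewrite size_iota idx_size.
Qed.

Definition gamma_ord (x : seq nat) : rel nat :=
  fun i j => gamma_rel (nth 0 x i, i) (nth 0 x j, j).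

Section GammaOrder.
Variable x : seq nat.

Lemma gamma_ord_refl : reflexive (gamma_ord x).
Proof. by move=> i; rewrite /gamma_ord /gamma_rel /= eqxx leqnn orbT. Qed.

Lemma gamma_ord_total : total (gamma_ord x).
Proof.
move=> i j; rewrite /gamma_ord /gamma_rel /=.
by case: (ltngtP (nth 0 x i) (nth 0 x j)) => //= _; apply: leq_total.
Qed.

Lemma gamma_ord_trans : transitive (gamma_ord x).
Proof.
move=> j i k; rewrite /gamma_ord /gamma_rel /=.
case/orP=> [lt_ij|/andP[/eqP eq_ij le_ji]]; case/orP=> [lt_jk|/andP[/eqP eq_jk le_kj]].
- by rewrite (ltn_trans lt_ij lt_jk).
- by rewrite -eq_jk lt_ij.
- by rewrite eq_ij lt_jk.
- by rewrite eq_ij eq_jk eqxx (leq_trans le_kj le_ji) orbT.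
Qed.

Lemma gamma_ord_anti : antisymmetric (gamma_ord x).
Proof.
move=> i j; rewrite /gamma_ord /gamma_rel /=.
case: (ltngtP (nth 0 x i) (nth 0 x j)) => //= _ /andP[le_ji le_ij].
by apply/eqP; rewrite eqn_leq le_ij le_ji.
Qed.

Lemma gammaE : gamma x = sort (gamma_ord x) (iota 0 (size x)).
Proof.
rewrite /gamma.
have -> : zip x (iota 0 (size x)) = map (fun i => (nth 0 x i, i)) (iota 0 (size x)).
  apply: (@eq_from_nth _ (0, 0)); first by rewrite size_zip size_map size_iota minnn.
  move=> i; rewrite size_zip size_iota minnn => lt_i.
  by rewrite nth_zip ?size_iota // (nth_map 0) ?size_iota // nth_iota.
by rewrite sort_map -map_comp map_id.
Qed.

Lemma size_gamma : size (gamma x) = size x.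
Proof. by rewrite gammaE size_sort size_iota. Qed.

Lemma mem_gamma i : (i \in gamma x) = (i < size x).
Proof. by rewrite gammaE mem_sort mem_iota. Qed.

Lemma sorted_gamma : sorted (gamma_ord x) (gamma x).
Proof. by rewrite gammaE; apply: sort_sorted gamma_ord_total _. Qed.

Lemma gamma_ordE :
  {in gtn (size x) &,
    forall i j, gamma_ord x i j = (index i (gamma x) <= index j (gamma x))}.
Proof.
move=> i j lt_i lt_j; apply: sorted_indexE; rewrite ?mem_gamma //.
- exact: gamma_ord_refl.
- exact: gamma_ord_anti.
- exact: gamma_ord_trans.
- exact: sorted_gamma.
Qed.

End GammaOrder.

Lemma gamma_eqP x y :
  gamma x = gamma y <-> size x = size y /\ {in gtn (size x) &, gamma_ord x =2 gamma_ord y}.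
Proof.
split=> [eq_xy | [eq_size eq_ord]].
  have eq_size : size x = size y by rewrite -size_gamma eq_xy size_gamma.
  by split=> // i j lt_i lt_j; rewrite !gamma_ordE -?eq_size // eq_xy.
rewrite !gammaE -eq_size.
apply: (sorted_eq (@gamma_ord_trans x) (@gamma_ord_anti x)).
- exact: sort_sorted (@gamma_ord_total x) _.
- rewrite (@eq_in_sorted _ (gtn (size x)) _ (gamma_ord y)) //.
    exact: sort_sorted (@gamma_ord_total y) _.
  by apply/allP=> i; rewrite mem_sort mem_iota.
- by rewrite perm_sort perm_sym perm_sort.
Qed.

Lemma cay_equiv_size x y : cay_equiv x y -> size x = size y.
Proof. by rewrite /cay_equiv => /gamma_eqP[]. Qed.

(* [contains x y] unfolds to [exists idx, embeds x y idx]. *)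
Definition embeds (x y idx : seq nat) : Prop :=
  [/\ size idx = size y, sorted ltn idx, all (fun i => i < size x) idx &
      forall s t, s < size y -> t < size y ->
        (nth 0 x (nth 0 idx s) < nth 0 x (nth 0 idx t) <-> nth 0 y s < nth 0 y t) /\
        (nth 0 x (nth 0 idx s) = nth 0 x (nth 0 idx t) <-> nth 0 y s = nth 0 y t)].

Definition order_iso (u v : seq nat) : Prop :=
  size u = size v /\ forall s t, s < size u -> t < size u ->
    (nth 0 u s < nth 0 u t <-> nth 0 v s < nth 0 v t) /\
    (nth 0 u s = nth 0 u t <-> nth 0 v s = nth 0 v t).

Section Embeddings.
Variables x y idx : seq nat.
Hypothesis x_embeds_y : embeds x y idx.

Lemma size_embeds : size y <= size x.
Proof.
case: x_embeds_y => idx_size idx_sorted idx_range _.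
rewrite -idx_size -(size_iota 0 (size x)); apply: uniq_leq_size.
  by apply: sorted_uniq idx_sorted; [exact: ltn_trans | exact: ltnn].
by move=> i /(allP idx_range); rewrite mem_iota add0n.
Qed.

Lemma gamma_ord_embeds :
  {in gtn (size y) &,
    forall s t, gamma_ord y s t = gamma_ord x (nth 0 idx s) (nth 0 idx t)}.
Proof.
case: x_embeds_y => idx_size idx_sorted _ same_pattern s t lt_s lt_t.
have [same_lt same_eq] := same_pattern s t lt_s lt_t.
rewrite /gamma_ord /gamma_rel /= sorted_ltn_nth_leq ?inE ?idx_size //.
congr (_ || (_ && _)); first by apply/idP/idP => /same_lt.
by apply/eqP/eqP => /same_eq.
Qed.

Lemma gamma_embeds_full : size y = size x -> gamma y = gamma x.
Proof.
move=> eq_size; case: (x_embeds_y) => idx_size idx_sorted idx_range _.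
have idx_id : idx = iota 0 (size x) by apply: sorted_ltn_iota; rewrite ?idx_size.
apply/gamma_eqP; split=> // s t lt_s lt_t.
by rewrite gamma_ord_embeds // idx_id !nth_iota -?eq_size.
Qed.

Lemma embeds_order_iso y' : order_iso y' y -> embeds x y' idx.
Proof.
case: x_embeds_y => idx_size idx_sorted idx_range same_pattern [eq_size iso].
split=> //; first by rewrite eq_size.
move=> s t lt_s lt_t; rewrite -eq_size in same_pattern.
have [lt_x eq_x] := same_pattern s t lt_s lt_t; have [lt_y eq_y] := iso s t lt_s lt_t.
by split; [apply: iff_trans lt_x (iff_sym lt_y) | apply: iff_trans eq_x (iff_sym eq_y)].
Qed.

End Embeddings.

Lemma embeds_id x : embeds x x (iota 0 (size x)).
Proof.
split; rewrite ?size_iota ?iota_ltn_sorted //; first by apply/allP => i; rewrite mem_iota.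
by move=> s t lt_s lt_t; rewrite !nth_iota.
Qed.

Lemma embeds_subseq x idx : sorted ltn idx -> all (fun i => i < size x) idx ->
  embeds x (map (nth 0 x) idx) idx.
Proof.
move=> idx_sorted idx_range; split; rewrite ?size_map //.
by move=> s t lt_s lt_t; rewrite !(nth_map 0).
Qed.

Section Standardization.
Variable w : seq nat.
Let vals := sort leq (undup w).

Definition standardize := map (fun v => (index v vals).+1) w.

Let mem_vals v : (v \in vals) = (v \in w).
Proof. by rewrite mem_sort mem_undup. Qed.

Let leq_vals : {in vals &, forall a b, (a <= b) = (index a vals <= index b vals)}.
Proof.
apply: sorted_indexE; [exact: leqnn | exact: anti_leq | exact: leq_trans |].
exact: sort_sorted leq_total _.
Qed.

Lemma standardize_order_iso : order_iso standardize w.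
Proof.
have size_std : size standardize = size w by apply: size_map.
split=> // s t; rewrite size_std => lt_s lt_t.
have ws_vals : nth 0 w s \in vals by rewrite mem_vals mem_nth.
have wt_vals : nth 0 w t \in vals by rewrite mem_vals mem_nth.
rewrite !(nth_map 0) // ltnS !ltnNge [nth 0 w t <= _]leq_vals //.
by split=> //; split=> [[/(index_inj 0 ws_vals wt_vals)] | ->].
Qed.

Lemma standardize_cay : is_cay standardize.
Proof.
split=> [|k /andP[k_gt0 k_le]]; first by apply/allP => v /mapP[a _ ->].
have max_le : wmax standardize <= size vals.
  by rewrite /wmax foldrE; apply/bigmax_leqP_seq => _ /mapP[a a_w ->] _;
     rewrite index_mem mem_vals.
have lt_k : k.-1 < size vals by rewrite prednK // (leq_trans k_le).
apply/mapP; exists (nth 0 vals k.-1); first by rewrite -mem_vals mem_nth.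
by rewrite index_uniq // ?prednK // /vals sort_uniq undup_uniq.
Qed.

End Standardization.

Lemma embeds_cay_subseq x idx : sorted ltn idx -> all (fun i => i < size x) idx ->
  exists2 z, is_cay z & embeds x z idx.
Proof.
move=> idx_sorted idx_range; exists (standardize (map (nth 0 x) idx)).
  exact: standardize_cay.
exact/embeds_order_iso/standardize_order_iso/embeds_subseq.
Qed.

Lemma embeds_comp x y y' z idx idx' :
  embeds x y idx -> gamma y = gamma y' -> embeds y' z idx' ->
  exists2 z', is_cay z' & gamma z' = gamma z /\ embeds x z' (map (nth 0 idx) idx').
Proof.
move=> x_y eq_yy' y'_z; have [idx_size idx_sorted idx_range _] := x_y.
have [idx'_size idx'_sorted idx'_range _] := y'_z.
have [eq_size eq_ord] := iffLR (gamma_eqP y y') eq_yy'.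
have lt_idx' i : i \in idx' -> i < size y by rewrite eq_size => /(allP idx'_range).
have comp_sorted : sorted ltn (map (nth 0 idx) idx').
  rewrite sorted_map; apply: (sub_in_sorted (P := gtn (size idx))) idx'_sorted.
    by move=> a b lt_a lt_b; apply: (sorted_ltn_nth ltn_trans).
  by apply/allP => i /lt_idx'; rewrite idx_size.
have comp_range : all (fun i => i < size x) (map (nth 0 idx) idx').
  apply/allP => _ /mapP[i /lt_idx' lt_i ->].
  by rewrite (allP idx_range) ?mem_nth ?idx_size.
have [z' z'_cay x_z'] := embeds_cay_subseq comp_sorted comp_range.
exists z' => //; split=> //; apply/gamma_eqP.
have [z'_size _ _ _] := x_z'; rewrite size_map idx'_size in z'_size.
split=> // s t; rewrite -z'_size => lt_s lt_t.
have lt_s' : nth 0 idx' s < size y by rewrite lt_idx' ?mem_nth ?idx'_size.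
have lt_t' : nth 0 idx' t < size y by rewrite lt_idx' ?mem_nth ?idx'_size.
rewrite (gamma_ord_embeds x_z') -?z'_size // !(nth_map 0) ?idx'_size //.
by rewrite -(gamma_ord_embeds x_y) // eq_ord // (gamma_ord_embeds y'_z).
Qed.

Lemma class_ge_refl x : is_cay x -> class_ge x x.
Proof.
by move=> x_cay; exists x, x; split=> //; exists (iota 0 (size x)); apply: embeds_id.
Qed.

Lemma class_ge_anti x y : class_ge x y -> class_ge y x -> cay_equiv x y.
Proof.
move=> [x1 [y1 [_ _ x1x y1y [idx1 x1_y1]]]] [y2 [x2 [_ _ y2y x2x [idx2 y2_x2]]]].
have eq_size : size y1 = size x1.
  apply/eqP; rewrite eqn_leq (size_embeds x1_y1) (cay_equiv_size x1x) -(cay_equiv_size x2x).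
  by rewrite (leq_trans (size_embeds y2_x2)) // (cay_equiv_size y2y) -(cay_equiv_size y1y).
by rewrite /cay_equiv -x1x -y1y (gamma_embeds_full x1_y1).
Qed.

Lemma class_ge_trans x y z : class_ge x y -> class_ge y z -> class_ge x z.
Proof.
move=> [x1 [y1 [x1_cay _ x1x y1y [idx1 x1_y1]]]] [y2 [z2 [_ _ y2y z2z [idx2 y2_z2]]]].
have y1y2 : gamma y1 = gamma y2 by rewrite y1y y2y.
have [z' z'_cay [z'z2 x1_z']] := embeds_comp x1_y1 y1y2 y2_z2.
by exists x1, z'; split=> //; [rewrite /cay_equiv z'z2 | exists (map (nth 0 idx1) idx2)].
Qed.

Theorem proposition4p15 :
  (forall x, is_cay x -> class_ge x x) /\
  (forall x y, is_cay x -> is_cay y -> class_ge x y -> class_ge y x -> cay_equiv x y) /\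
  (forall x y z, is_cay x -> is_cay y -> is_cay z ->
     class_ge x y -> class_ge y z -> class_ge x z).
Proof.
split; first exact: class_ge_refl.
split=> [x y _ _ | x y z _ _ _]; [exact: class_ge_anti | exact: class_ge_trans].
Qed.
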